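(* Let $F$ be a graph on $v$ vertices and let $n\ge v$. Then $$\mathrm{exa}_1(n,F)\le \binom{v}{2}+\zeta(F)(n-v)+\mathrm{ex}(n-v,F).$$
   Context: For graphs $H$ and $F$, $\mathcal N(H,F)$ is the number of subgraphs of $H$ isomorphic to $F$. $\mathrm{exa}_1(n,F)$ is the largest number of edges of a simple graph $H$ on $n$ vertices with $\mathcal N(H,F)=1$. $\mathrm{ex}(m,F)$ is the largest number of edges of a graph on $m$ vertices with no subgraph isomorphic to $F$. For a graph $G$, $\zeta(G)$ denotes the largest integer $z$ such that one can add to a copy of $G$ a new vertex together with $z$ edges joining it to vertices of that copy, so that the resulting graph contains no copy of $G$ other than the original one. *)

From mathcomp Require Import all_boot.
Set Implicit Arguments. Unset Strict Implicit. Unset Printing Implicit Defensive.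

Definition simple_graph (T : finType) (E : {set {set T}}) : bool :=
  [forall e in E, #|e| == 2].

(* A subgraph of H (on vertex type T) is a pair (S, E') with S a vertex set
   and E' a set of edges of H; it is a copy of F (on vertex type V) if there is
   an injection f : V -> T with image S mapping the edge set of F onto E'. *)
Definition is_copy (T V : finType) (EH : {set {set T}}) (EF : {set {set V}})
    (p : {set T} * {set {set T}}) : bool :=
  (p.2 \subset EH) &&
  [exists f : {ffun V -> T},
     [&& injectiveb f, f @: [set: V] == p.1 &
         p.2 == [set (f @: e) | e : {set V} in EF]]].

Definition copies (T V : finType) (EH : {set {set T}}) (EF : {set {set V}}) :=
  [set p : {set T} * {set {set T}} | is_copy EH EF p].

Definition Ncopies (T V : finType) (EH : {set {set T}}) (EF : {set {set V}}) : nat :=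
  #|copies EH EF|.

(* ex(m,F): max number of edges of an F-free simple graph on m vertices
   (0 if there is no such graph). *)
Definition ex (m : nat) (V : finType) (EF : {set {set V}}) : nat :=
  \max_(E : {set {set 'I_m}} | simple_graph E && (Ncopies E EF == 0)) #|E|.

(* exa_1(n,F): max number of edges of a simple graph on n vertices containing
   exactly one copy of F (0 if there is no such graph). *)
Definition exa1 (n : nat) (V : finType) (EF : {set {set V}}) : nat :=
  \max_(E : {set {set 'I_n}} | simple_graph E && (Ncopies E EF == 1)) #|E|.

(* Adding a new vertex (None) to a copy of G (vertices Some x) joined to A. *)
Definition add_vertex (V : finType) (EG : {set {set V}}) (A : {set V})
  : {set {set option V}} :=
  [set ((@Some V) @: e) | e : {set V} in EG] :|: [set [set None; Some a] | a in A].

Definition orig_copy (V : finType) (EG : {set {set V}})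
  : {set option V} * {set {set option V}} :=
  ((@Some V) @: [set: V], [set ((@Some V) @: e) | e : {set V} in EG]).

Definition zeta_ok (V : finType) (EG : {set {set V}}) (z : nat) : bool :=
  [exists A : {set V},
     (#|A| == z) && (copies (add_vertex EG A) EG == [set orig_copy EG])].

(* zeta(G): largest such z (z <= |V(G)| necessarily); 0 if none exists. *)
Definition zeta (V : finType) (EG : {set {set V}}) : nat :=
  \max_(z < #|V|.+1 | zeta_ok EG z) z.

From mathcomp Require Import all_boot.

Set Implicit Arguments.
Unset Strict Implicit.
Unset Printing Implicit Defensive.

(* Let H have n vertices and a unique copy of F, on the vertex set S (|S| = v).
   Split the edges of H: at most C(v,2) lie inside S; those inside the
   complement form a graph on n - v vertices without a copy of F (any copy would
   be a second one), so there are at most ex(n-v,F) of them; and each vertex u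
   outside S has at most zeta(F) neighbours in S, since F together with u and
   these edges embeds in H and therefore contains F only once. *)

Section TransportCopies.

Variables (T1 T2 : finType) (phi : T1 -> T2).
Hypothesis phi_inj : injective phi.

Definition imset_copy (p : {set T1} * {set {set T1}}) : {set T2} * {set {set T2}} :=
  (phi @: p.1, [set phi @: e | e : {set T1} in p.2]).

Lemma imset_copy_inj : injective imset_copy.
Proof.
by move=> [S1 E1] [S2 E2] [/(imset_inj phi_inj) -> /(imset_inj (imset_inj phi_inj)) ->].
Qed.

Lemma is_copy_imset (E1 : {set {set T1}}) (E2 : {set {set T2}})
    (V : finType) (EF : {set {set V}}) p :
  {in E1, forall e : {set T1}, phi @: e \in E2} ->
  is_copy E1 EF p -> is_copy E2 EF (imset_copy p).
Proof.
move=> phiE /andP[sub_p /existsP[f /and3P[/injectiveP f_inj /eqP f_p1 /eqP f_p2]]].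
apply/andP; split.
  by apply/subsetP => _ /imsetP[e /(subsetP sub_p) eE ->]; apply: phiE.
apply/existsP; exists [ffun x => phi (f x)]; apply/and3P; split.
- by apply/injectiveP => x y; rewrite !ffunE => /phi_inj/f_inj.
- by rewrite /= -f_p1 -imset_comp; apply/eqP/eq_imset => x; rewrite ffunE.
- rewrite /= f_p2 -imset_comp; apply/eqP/eq_imset => e /=.
  by rewrite -imset_comp; apply: eq_imset => x; rewrite ffunE.
Qed.

Lemma leq_Ncopies_embed (E1 : {set {set T1}}) (E2 : {set {set T2}})
    (V : finType) (EF : {set {set V}}) :
  {in E1, forall e : {set T1}, phi @: e \in E2} -> Ncopies E1 EF <= Ncopies E2 EF.
Proof.
move=> phiE; rewrite /Ncopies -(card_imset _ imset_copy_inj).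
apply/subset_leq_card/subsetP => _ /imsetP[p + ->]; rewrite !inE.
exact: is_copy_imset.
Qed.

End TransportCopies.

Lemma leq_card_bigcup (I T : finType) (P : {pred I}) (B : I -> {set T}) :
  #|\bigcup_(i in P) B i| <= \sum_(i in P) #|B i|.
Proof.
elim/big_rec2: _ => [|i U s _ le_Us]; first by rewrite cards0.
by rewrite (leq_trans (leq_card_setU _ _)) ?leq_add2l.
Qed.

Lemma imset_preimset (T1 T2 : finType) (h : T1 -> T2) (e : {set T2}) :
  e \subset h @: setT -> h @: (h @^-1: e) = e.
Proof.
move=> sub_e; apply/setP => x; apply/imsetP/idP => [[i]|xe].
  by rewrite inE => ie ->.
have /imsetP[i _ xi] := subsetP sub_e x xe.
by exists i; rewrite // inE -xi.
Qed.

Lemma card_pullback_edges (T1 T2 : finType) (h : T1 -> T2) (E : {set {set T2}}) :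
  injective h ->
  #|[set e in E | e \subset h @: setT]| = #|[set e : {set T1} | h @: e \in E]|.
Proof.
move=> h_inj; rewrite -[RHS](card_imset _ (imset_inj h_inj)); apply: eq_card => e.
rewrite inE; apply/andP/imsetP => [[eE sub_e]|[e' + ->]].
  by exists (h @^-1: e); rewrite ?inE imset_preimset.
by rewrite inE => e'E; split; last exact: imsetS (subsetT _).
Qed.

Section EdgeCounts.

Variables (T : finType) (E : {set {set T}}).
Hypothesis simpleE : simple_graph E.

Lemma card_edges_split (S : {set T}) :
  #|E| <= #|[set e in E | e \subset S]| + #|[set e in E | e \subset ~: S]|
          + #|[set e in E | ~~ (e \subset S) & ~~ (e \subset ~: S)]|.
Proof.
apply: leq_trans (leq_add (leq_card_setU _ _) (leqnn _)).
apply: leq_trans (leq_card_setU _ _).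
apply/subset_leq_card/subsetP => e eE; rewrite !inE eE.
by case: (e \subset S); case: (e \subset ~: S).
Qed.

Lemma card_edges_within (S : {set T}) :
  #|[set e in E | e \subset S]| <= 'C(#|S|, 2).
Proof.
rewrite -cards_draws; apply/subset_leq_card/subsetP => e.
by rewrite !inE => /andP[eE ->]; rewrite (forall_inP simpleE).
Qed.

Lemma card_edges_within_free (V : finType) (EF : {set {set V}}) (U : {set T}) :
  (forall p, is_copy E EF p -> ~~ (p.1 \subset U)) ->
  #|[set e in E | e \subset U]| <= ex #|U| EF.
Proof.
move=> no_copy_in_U.
pose h : 'I_#|U| -> T := enum_val.
have h_inj : injective h := @enum_val_inj _ _.
have h_range : h @: setT = U.
  apply/setP => x; apply/imsetP/idP => [[i _ ->]|xU]; first exact: enum_valP.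
  by exists (enum_rank_in xU x); rewrite ?inE /h ?enum_rankK_in.
have := card_pullback_edges E h_inj; rewrite h_range => ->.
apply: leq_bigmax_cond; apply/andP; split.
  apply/forall_inP => e; rewrite inE => he.
  by rewrite -(card_imset _ h_inj) (forall_inP simpleE).
rewrite cards_eq0; apply/eqP/setP => p; rewrite !inE; apply/negP => p_copy.
have hE : {in [set e : {set 'I_#|U|} | h @: e \in E],
             forall e : {set 'I_#|U|}, h @: e \in E}.
  by move=> e; rewrite inE.
have := no_copy_in_U _ (is_copy_imset h_inj hE p_copy).
by rewrite /= (subset_trans (imsetS h (subsetT _))) ?h_range.
Qed.

Lemma card_crossing_edges (V : finType) (f : V -> T) (S : {set T}) :
  f @: setT = S ->
  #|[set e in E | ~~ (e \subset S) & ~~ (e \subset ~: S)]|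
    <= \sum_(u in ~: S) #|[set a | [set u; f a] \in E]|.
Proof.
move=> f_range.
pose star u := [set [set u; f a] | a in [set a | [set u; f a] \in E]].
have star_edge u w : u \notin S -> w \in S -> [set u; w] \in E ->
    [set u; w] \in \bigcup_(u in ~: S) star u.
  move=> uS wS uwE; have /imsetP[a _ wa] : w \in f @: setT by rewrite f_range.
  rewrite wa in uwE *; apply/bigcupP; exists u; rewrite ?inE //.
  by apply/imsetP; exists a; rewrite ?inE.
apply: leq_trans (leq_trans _ (leq_card_bigcup (~: S) star)) _; last first.
  by apply: leq_sum => u _; apply: leq_imset_card.
apply/subset_leq_card/subsetP => e; rewrite !inE => /and3P[eE nsubS nsubCS].
have /cards2P[x [y [_ exy]]] := forall_inP simpleE e eE.
move: nsubS nsubCS eE; rewrite exy !subUset !sub1set !in_setC.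
case: (boolP (x \in S)) => xS; case: (boolP (y \in S)) => yS //= _ _ xyE.
  by rewrite setUC star_edge // setUC.
exact: star_edge.
Qed.

End EdgeCounts.

Lemma orig_copy_in_copies (V : finType) (EG : {set {set V}}) (A : {set V}) :
  orig_copy EG \in copies (add_vertex EG A) EG.
Proof.
rewrite inE; apply/andP; split; first exact: subsetUl.
apply/existsP; exists [ffun x => Some x]; apply/and3P; split.
- by apply/injectiveP => x y; rewrite !ffunE => -[].
- by apply/eqP/eq_imset => x; rewrite ffunE.
- by apply/eqP/eq_imset => e; apply: eq_imset => x; rewrite ffunE.
Qed.

Lemma leq_zeta (V : finType) (EG : {set {set V}}) (A : {set V}) :
  Ncopies (add_vertex EG A) EG <= 1 -> #|A| <= zeta EG.
Proof.
move=> le_copies1.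
have copiesE : copies (add_vertex EG A) EG = [set orig_copy EG].
  apply/eqP; rewrite eq_sym eqEcard sub1set orig_copy_in_copies cards1.
  exact: le_copies1.
have ltA : #|A| < #|V|.+1 by rewrite ltnS max_card.
apply: (@leq_bigmax_cond _ _ (fun z : 'I_#|V|.+1 => val z) (Ordinal ltA)).
by apply/existsP; exists A; rewrite eqxx copiesE eqxx.
Qed.

Lemma card_neighbours_leq_zeta (T V : finType) (E : {set {set T}})
    (EF : {set {set V}}) (f : V -> T) (u : T) :
  Ncopies E EF <= 1 -> injective f -> {in EF, forall e : {set V}, f @: e \in E} ->
  u \notin f @: setT -> #|[set a | [set u; f a] \in E]| <= zeta EF.
Proof.
move=> le_copies1 f_inj fE u_out; apply: leq_zeta; apply: leq_trans le_copies1.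
pose phi o := if o is Some a then f a else u.
have phi_inj : injective phi.
  have f_in a : f a \in f @: setT by rewrite imset_f.
  move=> [a|] [b|] //= eq_ab; first by rewrite (f_inj _ _ eq_ab).
    by move: u_out; rewrite -eq_ab f_in.
  by move: u_out; rewrite eq_ab f_in.
apply: (leq_Ncopies_embed phi_inj) => e; rewrite inE.
case/orP=> /imsetP[e' + ->]; first by rewrite -imset_comp; apply: fE.
by rewrite inE imsetU1 imset_set1.
Qed.

Theorem proposition2p3 (v : nat) (EF : {set {set 'I_v}}) (n : nat) :
  0 < v -> simple_graph EF -> v <= n ->
  exa1 n EF <= 'C(v, 2) + zeta EF * (n - v) + ex (n - v) EF.
Proof.
move=> v_gt0 _ _; apply/bigmax_leqP => E /andP[simpleE one_copy].
have [[S E0] copiesE] := cards1P one_copy.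
have only_copy p : is_copy E EF p -> p = (S, E0).
  by move=> p_copy; apply/set1P; rewrite -copiesE inE.
have : (S, E0) \in copies E EF by rewrite copiesE set11.
rewrite inE => /andP[/= sub_E0 /existsP[f]].
case/and3P=> /injectiveP f_inj /eqP f_range /eqP E0E.
have cardS : #|S| = v by rewrite -f_range card_imset // cardsT card_ord.
have cardCS : #|~: S| = n - v by rewrite cardsCs setCK cardS card_ord.
have fE : {in EF, forall e : {set 'I_v}, f @: e \in E}.
  by move=> e eF; apply: (subsetP sub_E0); rewrite E0E imset_f.
have f0S : f (Ordinal v_gt0) \in S by rewrite -f_range imset_f.
apply: leq_trans (card_edges_split E S) _; rewrite addnAC.
apply: leq_add; first apply: leq_add.
- by rewrite -cardS card_edges_within.
- rewrite mulnC -cardCS -sum_nat_const.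
  apply: leq_trans (card_crossing_edges simpleE f_range) _.
  apply: leq_sum => u; rewrite inE -f_range => u_out.
  by apply: card_neighbours_leq_zeta; rewrite // /Ncopies copiesE cards1.
- rewrite -cardCS; apply: card_edges_within_free => // p /only_copy -> /=.
  by apply/negP => /subsetP/(_ _ f0S); rewrite inE f0S.
Qed.
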